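(* Let $G$ be a finite simple undirected graph with maximum degree $\Delta$. Then $$\operatorname{adim}(G) \geq \frac{2(|V(G)|-1)}{\Delta+3}.$$
   Context: For a graph $G$, $d(u,v)$ is the shortest-path distance ($\infty$ if $u,v$ lie in different components), and $d_1(u,v)=\min(d(u,v),2)$. A set $A\subseteq V(G)$ is an adjacency resolving set if for all distinct $x,y\in V(G)$ there is $z\in A$ with $d_1(z,x)\neq d_1(z,y)$. The adjacency dimension $\operatorname{adim}(G)$ is the minimum cardinality of an adjacency resolving set. *)

From mathcomp Require Import all_boot all_order all_algebra.
Set Implicit Arguments. Unset Strict Implicit. Unset Printing Implicit Defensive.

Definition simple_graph (T : finType) (e : rel T) : Prop :=
  symmetric e /\ irreflexive e.

(* truncated distance d_1(u,v) = min(d(u,v), 2):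
   0 if u = v, 1 if u,v adjacent, 2 otherwise (d >= 2 or infinite). *)
Definition d1 (T : finType) (e : rel T) (u v : T) : nat :=
  if u == v then 0 else if e u v then 1 else 2.

Definition adj_resolving (T : finType) (e : rel T) (A : {set T}) : bool :=
  [forall x : T, forall y : T, (x != y) ==> [exists z in A, d1 e z x != d1 e z y]].

(* adjacency dimension: minimum cardinality of an adjacency resolving set
   (V(G) itself is resolving, so #|T| is an upper bound / neutral element). *)
Definition adim (T : finType) (e : rel T) : nat :=
  \big[minn/#|T|]_(A : {set T} | adj_resolving e A) #|A|.

Definition max_degree (T : finType) (e : rel T) : nat :=
  \max_(v : T) #|[set w | e v w]|.

From mathcomp Require Import all_boot all_order all_algebra.
From mathcomp Require Import zify lra.
Import GRing.Theory Num.Theory.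

(* Let A be adjacency resolving and v range over the n - |A| vertices
   outside A.  Two such vertices are only distinguished by a z in A through
   adjacency, so their traces N(v) :&: A are pairwise distinct.  At most one v
   has an empty trace and at most |A| have a singleton trace; all others
   contribute at least 2 to \sum_v |N(v) :&: A|, which is at most |A| Delta.
   Hence 2 (n - |A|) <= |A| Delta + |A| + 2, i.e. 2 n <= |A| (Delta + 3) + 2. *)

Lemma sum_nat_indicator (T : finType) (B : {set T}) (P : pred T) :
  \sum_(v in B) (P v : nat) = #|[set v in B | P v]|.
Proof. by rewrite -big_mkcondr sum1dep_card. Qed.

Lemma card_preim_in_inj_le {aT rT : finType} {f : aT -> rT} {D : {set aT}}
    (S : {set rT}) :
  {in D &, injective f} -> #|[set x in D | f x \in S]| <= #|S|.
Proof.
move=> f_inj; rewrite -(card_in_imset (f := f)); last first.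
  by move=> x y /setIdP[xD _] /setIdP[yD _]; apply: f_inj.
by apply/subset_leq_card/subsetP => _ /imsetP[x /setIdP[_ fxS] ->].
Qed.

Section AdjacencyTrace.

Variables (T : finType) (e : rel T) (A : {set T}).

Definition adj_trace (v : T) : {set T} := [set a in A | e a v].

Lemma adj_resolving_trace_inj :
  adj_resolving e A -> {in ~: A &, injective adj_trace}.
Proof.
move=> resA x y; rewrite !inE => xA yA trace_xy; apply/eqP/negPn/negP => nxy.
move/forallP/(_ x)/forallP/(_ y): resA; rewrite nxy /=.
case/existsP=> z /andP[zA]; rewrite /d1.
rewrite (negbTE (memPn xA z zA)) (negbTE (memPn yA z zA)).
have : (z \in adj_trace x) = (z \in adj_trace y) by rewrite trace_xy.
by rewrite !inE zA /= => ->; rewrite eqxx.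
Qed.

Lemma sum_card_adj_trace_le :
  \sum_(v in ~: A) #|adj_trace v| <= #|A| * max_degree e.
Proof.
under eq_bigr => v _ do rewrite -sum_nat_indicator.
rewrite exchange_big -sum_nat_const; apply: leq_sum => a _.
rewrite sum_nat_indicator; apply: leq_trans _ (leq_bigmax a).
by apply/subset_leq_card/subsetP => w; rewrite !inE => /andP[].
Qed.

Hypothesis resA : adj_resolving e A.

Lemma card_adj_trace1_le : #|[set v in ~: A | #|adj_trace v| == 1]| <= #|A|.
Proof.
have trace_inj := adj_resolving_trace_inj resA.
apply: leq_trans _ (leq_imset_card (set1 (T := T)) A).
apply: leq_trans _ (card_preim_in_inj_le (set1 @: A) trace_inj).
apply/subset_leq_card/subsetP => v; rewrite !inE => /andP[-> /cards1P[a trace_v]].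
rewrite trace_v; apply/imsetP; exists a => //.
by move: (set11 a); rewrite -trace_v inE => /andP[].
Qed.

Lemma card_adj_trace0_le : #|[set v in ~: A | adj_trace v == set0]| <= 1.
Proof.
rewrite -(cards1 (@set0 T)).
apply: leq_trans _ (card_preim_in_inj_le [set set0] (adj_resolving_trace_inj resA)).
by apply/subset_leq_card/subsetP => v; rewrite !inE.
Qed.

Lemma adj_resolving_card_bound : 2 * #|T| <= #|A| * (max_degree e + 3) + 2.
Proof.
have split_weight : \sum_(v in ~: A) 2 <= \sum_(v in ~: A) #|adj_trace v|
    + \sum_(v in ~: A) (#|adj_trace v| == 1 : nat)
    + 2 * \sum_(v in ~: A) (adj_trace v == set0 : nat).
  rewrite big_distrr -!big_split; apply: leq_sum => v _.
  by rewrite -cards_eq0; case: #|adj_trace v| => [|[|k]].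
move: split_weight; rewrite sum_nat_const !sum_nat_indicator.
have := sum_card_adj_trace_le; have := card_adj_trace1_le.
have := card_adj_trace0_le; have := cardsC A.
lia.
Qed.

End AdjacencyTrace.

Lemma adim_card_bound {T : finType} (e : rel T) :
  2 * #|T| <= adim e * (max_degree e + 3) + 2.
Proof.
rewrite /adim; elim/big_ind: _ => [| m n | A resA].
- lia.
- by rewrite /minn; case: ifP.
- exact: adj_resolving_card_bound.
Qed.

Local Open Scope ring_scope.

Theorem theorem1p13 (T : finType) (e : rel T) (He : simple_graph e) :
  (2 * ((#|T|)%:R - 1)) / ((max_degree e)%:R + 3) <= (adim e)%:R :> rat.
Proof.
rewrite ler_pdivrMr ?ltr_wpDl //.
have := adim_card_bound e; rewrite -(ler_nat rat) !natrD !natrM !natrD.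
lra.
Qed.
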